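(* For every $d \in \{2,3,4,5,8,12,16,17,24,32,40,48,80,112\}$, the sequence $\left(\left\lfloor n^8/d \right\rfloor\right)_{n \ge 1}$ is eventually prime-free.
   Context: A sequence $(a_n)_{n\ge 1}$ of positive integers is called eventually prime-free if there exists an index $n_0$ such that $a_n$ is composite for all $n \ge n_0$. (Here, as in the paper, this is understood as: only finitely many terms $a_n$ are prime.) *)

From mathcomp Require Import all_boot.
Set Implicit Arguments. Unset Strict Implicit. Unset Printing Implicit Defensive.

Definition eventually_prime_free (a : nat -> nat) : Prop :=
  exists n0 : nat, forall n : nat, 1 <= n -> n0 <= n -> ~~ prime (a n).

From mathcomp Require Import all_boot.
From mathcomp Require Import zify.

(* Write n^8 = N^2 with N = n^4 and N^2 = q d + r with 0 <= r < d, so that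
   q = floor(n^8/d).  If r = s^2 is a perfect square then q d = (N - s)(N + s),
   and a prime q would divide a factor of size at most N + s, although q is
   about N^2/d.  If q is even it is not prime either, being large.  Both r and
   the parity of q depend only on n modulo 2d, and for each listed d every
   residue class modulo 2d falls into one of the two cases, which is checked
   by computation. *)

(* Reducing after each squaring keeps the unary numbers small under vm_compute. *)
Definition iter_sqr_mod (m k a : nat) : nat := iter k (fun b => b * b %% m) (a %% m).

Lemma iter_sqr_modE m k a : iter_sqr_mod m k a = a ^ (2 ^ k) %% m.
Proof.
elim: k => [|k IHk]; first by rewrite expn1.
by rewrite /iter_sqr_mod iterS -/(iter_sqr_mod m k a) IHk modnMm -expnD addnn -mul2n expnS.
Qed.

Definition is_square (r : nat) : bool := has (fun s => s * s == r) (iota 0 r.+1).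

Lemma is_squareP r : is_square r -> exists s, r = s * s.
Proof. by case/hasP=> s _ /eqP <-; exists s. Qed.

Lemma ltn_sqr_divn d N : 0 < d -> 3 * d <= N -> N + d < N * N %/ d.
Proof.
move=> d_gt0 le_3d_N.
have := divn_eq (N * N) d; have := ltn_pmod (N * N) d_gt0; nia.
Qed.

Lemma sqr_divn_not_prime_sqr_mod d N s :
  0 < d -> 3 * d <= N -> N * N %% d = s * s -> ~~ prime (N * N %/ d).
Proof.
move=> d_gt0 le_3d_N rE; apply/negP=> q_prime.
have := ltn_sqr_divn d N d_gt0 le_3d_N; set q := N * N %/ d => lt_q.
have s_lt_d : s < d by move: (ltn_pmod (N * N) d_gt0); rewrite rE; nia.
have qdE : q * d = (N - s) * (N + s) by have := divn_eq (N * N) d; nia.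
have q_dvd : q %| (N - s) * (N + s) by rewrite -qdE dvdn_mulr.
have q_le : q <= N + s.
  by move: q_dvd; rewrite Euclid_dvdM // => /orP[] /dvdn_leq; lia.
lia.
Qed.

Lemma sqr_divn_not_prime_even d N :
  0 < d -> 3 * d <= N -> ~~ odd (N * N %/ d) -> ~~ prime (N * N %/ d).
Proof.
move=> d_gt0 le_3d_N q_even; apply/negP=> /even_prime [q2 | q_odd].
- by have := ltn_sqr_divn d N d_gt0 le_3d_N; rewrite q2; lia.
- by rewrite q_odd in q_even.
Qed.

Definition residue_certificate (d a : nat) : bool :=
  let r := iter_sqr_mod (2 * d) 3 a in is_square (r %% d) || ~~ odd (r %/ d).

Lemma residue_certificate_mod d n :
  residue_certificate d (n %% (2 * d)) =
  is_square (n ^ 8 %% d) || ~~ odd (n ^ 8 %/ d).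
Proof.
rewrite /residue_certificate iter_sqr_modE modnXm.
by rewrite (modn_dvdm _ (dvdn_mull 2 (dvdnn d))) -modn_divl modn2 oddb.
Qed.

Lemma eventually_prime_free_of_certificates d :
  0 < d -> all (residue_certificate d) (iota 0 (2 * d)) ->
  eventually_prime_free (fun n => n ^ 8 %/ d).
Proof.
move=> d_gt0 certs; exists (3 * d) => n n_gt0 le_3d_n.
have n8E : n ^ 8 = n ^ 4 * n ^ 4 by rewrite -expnD.
have le_3d_N : 3 * d <= n ^ 4.
  by apply: leq_trans le_3d_n _; rewrite -{1}(expn1 n) leq_pexp2l.
have n_mod : n %% (2 * d) \in iota 0 (2 * d) by rewrite mem_iota ltn_mod; lia.
move: (allP certs _ n_mod); rewrite residue_certificate_mod n8E.
case/orP=> [/is_squareP [s rE] | q_even].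
- exact: (sqr_divn_not_prime_sqr_mod d _ s d_gt0 le_3d_N rE).
- exact: (sqr_divn_not_prime_even d _ d_gt0 le_3d_N q_even).
Qed.

Theorem theorem5 (d : nat) :
  d \in [:: 2; 3; 4; 5; 8; 12; 16; 17; 24; 32; 40; 48; 80; 112] ->
  eventually_prime_free (fun n => n ^ 8 %/ d).
Proof.
have certified : all (fun d => (0 < d) && all (residue_certificate d) (iota 0 (2 * d)))
  [:: 2; 3; 4; 5; 8; 12; 16; 17; 24; 32; 40; 48; 80; 112] by vm_compute.
by move=> /(allP certified) /andP [d_gt0 certs]; apply: eventually_prime_free_of_certificates.
Qed.
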